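(* For all integers $a,b\ge1$, \[ 1+\frac{(2^a-1)(2^b-1)}{(2^{\gcd(a,b)}-1)\,2^{(a+b)/2}}>2^{(a+b)/2-\gcd(a,b)}. \] *)

From Stdlib Require Import Reals Arith.

(* Put X = 2^a, Y = 2^b, D = 2^gcd(a,b) and S = 2^((a+b)/2), so that S^2 = XY and
   2 <= D <= X, Y.  Clearing the denominator D (D - 1) S, the inequality becomes
   D (D - 1) S + D (X - 1) (Y - 1) > (D - 1) X Y, and the difference of the two
   sides is D (D - 1) (S - 1) + (X - D) (Y - D), which is positive. *)

From Stdlib Require Import Reals Arith Lra Psatz.
Open Scope R_scope.

Lemma gcd_between_1_l (a b : nat) : (1 <= a)%nat -> (1 <= Nat.gcd a b <= a)%nat.
Proof.
  intros ha; split.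
  - destruct (Nat.gcd a b) eqn:E; [|lia].
    apply Nat.gcd_eq_0_l in E; lia.
  - apply Nat.divide_pos_le; [lia|apply Nat.gcd_divide_l].
Qed.

Lemma Rpower_half_mul_self (x : R) (n : nat) :
  0 < x -> Rpower x (INR n / 2) * Rpower x (INR n / 2) = x ^ n.
Proof.
  intros hx; rewrite <- Rpower_plus, <- Rpower_pow by exact hx.
  f_equal; lra.
Qed.

Lemma Rpower_minus_INR (x y : R) (n : nat) :
  0 < x -> Rpower x (y - INR n) = Rpower x y / x ^ n.
Proof.
  intros hx; unfold Rminus, Rdiv.
  now rewrite Rpower_plus, Rpower_Ropp, Rpower_pow.
Qed.

Lemma Rpower_gt_1 (x y : R) : 1 < x -> 0 < y -> 1 < Rpower x y.
Proof.
  intros hx hy; rewrite <- (Rpower_O x) by lra.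
  now apply Rpower_lt.
Qed.

Lemma sqrt_prod_div_lt (X Y D S : R) :
  1 < D -> D <= X -> D <= Y -> 1 < S -> S * S = X * Y ->
  S / D < 1 + (X - 1) * (Y - 1) / ((D - 1) * S).
Proof.
  intros hD hX hY hS hSS.
  assert (hscale : 0 < D * (D - 1) * S) by (apply Rmult_lt_0_compat; nra).
  apply (Rmult_lt_reg_r (D * (D - 1) * S)); [exact hscale|].
  replace (S / D * (D * (D - 1) * S)) with ((D - 1) * (X * Y))
    by (rewrite <- hSS; field; lra).
  replace ((1 + (X - 1) * (Y - 1) / ((D - 1) * S)) * (D * (D - 1) * S))
    with (D * (D - 1) * S + D * (X - 1) * (Y - 1)) by (field; lra).
  assert (hgap : D * (D - 1) * S + D * (X - 1) * (Y - 1) - (D - 1) * (X * Y)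
                 = D * (D - 1) * (S - 1) + (X - D) * (Y - D)) by ring.
  assert (0 < D * (D - 1) * (S - 1)) by (apply Rmult_lt_0_compat; nra).
  assert (0 <= (X - D) * (Y - D)) by (apply Rmult_le_pos; lra).
  lra.
Qed.

Theorem lemma3 (a b : nat) (ha : (1 <= a)%nat) (hb : (1 <= b)%nat) :
  1 + ((2 ^ a - 1) * (2 ^ b - 1)) /
        ((2 ^ (Nat.gcd a b) - 1) * Rpower 2 (INR (a + b) / 2))
  > Rpower 2 (INR (a + b) / 2 - INR (Nat.gcd a b)).
Proof.
  destruct (gcd_between_1_l a b ha) as [hd1 hda].
  assert (hdb : (Nat.gcd a b <= b)%nat).
  { rewrite Nat.gcd_comm; apply gcd_between_1_l, hb. }
  rewrite Rpower_minus_INR by lra.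
  apply Rlt_gt, sqrt_prod_div_lt.
  - apply Rlt_le_trans with (2 ^ 1); [lra|apply Rle_pow; lra || lia].
  - apply Rle_pow; lra || lia.
  - apply Rle_pow; lra || lia.
  - apply Rpower_gt_1; [lra|].
    apply Rdiv_lt_0_compat; [apply lt_0_INR; lia|lra].
  - now rewrite Rpower_half_mul_self, pow_add by lra.
Qed.
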